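(* Every non-empty partial metric space $(X,p_X)$ has at least two p-Cauchy completions that are not isometric; that is, there are p-Cauchy completions $(\bar X,i)$ and $(\tilde X,j)$ of $X$ for which there is no bijective isometry $g\colon\bar X\to\tilde X$ with $g\circ i=j$.
   Context: A partial metric on a set $X$ is a function $p_X\colon X\times X\to\mathbb{R}_{\geq0}$ such that for all $x,y,z\in X$: (P1) $p_X(x,x)=p_X(x,y)=p_X(y,y)$ implies $x=y$; (P2) $p_X(x,x)\leq p_X(x,y)$; (P3) $p_X(x,y)=p_X(y,x)$; (P4) $p_X(x,z)+p_X(y,y)\leq p_X(x,y)+p_X(y,z)$. For $x\in X$ and $\varepsilon>0$, $B_\varepsilon(x)=\{y\in X: p_X(x,y)<p_X(x,x)+\varepsilon\}$. A subset $A\subseteq X$ is dense in $X$ if for every $x\in X$ and $\varepsilon>0$ there is $y\in A$ with $y\in B_\varepsilon(x)$. A sequence $(x_n)$ in $X$ p-converges to $x\in X$ if $p_X(x,x)=\lim_{n}p_X(x,x_n)=\lim_{n}p_X(x_n,x_n)$; it is p-Cauchy if $\lim_{n,m\to\infty}p_X(x_n,x_m)$ exists and is finite. $X$ is p-Cauchy complete if every p-Cauchy sequence p-converges. An isometric embedding (isometry) $i\colon X\to Y$ is a map with $p_Y(i(x),i(y))=p_X(x,y)$ for all $x,y$. A p-Cauchy completion of $X$ is a pair $(\bar X,i)$ where $\bar X$ is a p-Cauchy complete partial metric space and $i\colon X\to\bar X$ is an isometric embedding with $i(X)$ dense in $\bar X$. *)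

From Stdlib Require Export Reals.
Open Scope R_scope.

Section PM.
Context {X : Type}.

Definition is_partial_metric (p : X -> X -> R) : Prop :=
  (forall x y, 0 <= p x y) /\
  (forall x y, p x x = p x y -> p x y = p y y -> x = y) /\
  (forall x y, p x x <= p x y) /\
  (forall x y, p x y = p y x) /\
  (forall x y z, p x z + p y y <= p x y + p y z).

Definition pball (p : X -> X -> R) (x : X) (eps : R) (y : X) : Prop :=
  p x y < p x x + eps.

Definition pdense (p : X -> X -> R) (A : X -> Prop) : Prop :=
  forall x eps, 0 < eps -> exists y, A y /\ pball p x eps y.

Definition p_converges (p : X -> X -> R) (u : nat -> X) (x : X) : Prop :=
  Un_cv (fun n => p x (u n)) (p x x) /\ Un_cv (fun n => p (u n) (u n)) (p x x).

Definition p_Cauchy (p : X -> X -> R) (u : nat -> X) : Prop :=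
  exists a : R, forall eps, 0 < eps ->
    exists N : nat, forall n m, (N <= n)%nat -> (N <= m)%nat ->
      Rabs (p (u n) (u m) - a) < eps.

Definition p_Cauchy_complete (p : X -> X -> R) : Prop :=
  forall u, p_Cauchy p u -> exists x, p_converges p u x.
End PM.

Definition isometry {X Y : Type} (pX : X -> X -> R) (pY : Y -> Y -> R)
  (f : X -> Y) : Prop := forall x y, pY (f x) (f y) = pX x y.

Definition bijective_map {X Y : Type} (f : X -> Y) : Prop :=
  (forall x y, f x = f y -> x = y) /\ (forall y, exists x, f x = y).

Definition is_pCauchy_completion {X Y : Type} (pX : X -> X -> R)
  (pY : Y -> Y -> R) (i : X -> Y) : Prop :=
  is_partial_metric pY /\ p_Cauchy_complete pY /\ isometry pX pY i /\
  pdense pY (fun y => exists x, i x = y).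

From Stdlib Require Import Reals Lra Lia Classical ClassicalEpsilon ProofIrrelevance
  FunctionalExtensionality PropExtensionality.
Open Scope R_scope.

(* Take the standard completion: p-Cauchy sequences of X, with distance lim p (u n) (v n),
   where u and v are identified when lim p (u n) (u n) = lim p (u n) (v n) = lim p (v n) (v n).
   Each of its points is the p-limit of the embedded terms of a representative, and this
   (together with convergence of embedded p-Cauchy sequences) already yields completeness
   and density.  Adjoining a copy of an embedded point with all its distances raised by 1
   gives a second completion, because partial-metric balls are too coarse to see the shift;
   but the new point is the p-limit of no sequence of old points, whereas an isometry
   fixing X would carry p-limits of embedded sequences to such p-limits. *)

Lemma Rabs_le_bounds x a : Rabs x <= a -> - a <= x <= a.
Proof. split_Rabs; lra. Qed.

Ltac Rabs_bounds :=
  repeat match goal with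
  | H : Rabs _ < _ |- _ => apply Rabs_def2 in H; destruct H
  | H : Rabs _ <= _ |- _ => apply Rabs_le_bounds in H; destruct H
  | |- Rabs _ < _ => apply Rabs_def1
  | |- Rabs _ <= _ => apply Rabs_le; split
  end.

Lemma Un_cv_const c : Un_cv (fun _ => c) c.
Proof.
  intros eps Heps; exists 0%nat; intros n _.
  unfold Rdist; rewrite Rminus_diag, Rabs_R0; lra.
Qed.

Lemma Un_cv_eventually_ext f g N l :
  (forall n, (N <= n)%nat -> f n = g n) -> Un_cv f l -> Un_cv g l.
Proof.
  intros Hfg Hf; apply (CV_shift g N), (Un_cv_ext (fun n => f (n + N)%nat)).
  - intros n; apply Hfg; lia.
  - now apply CV_shift'.
Qed.

Lemma Un_cv_dist_le f l c e N :
  Un_cv f l -> (forall n, (N <= n)%nat -> Rabs (f n - c) <= e) -> Rabs (l - c) <= e.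
Proof.
  intros Hf Hbound.
  assert (Hshift := CV_shift' f N l Hf).
  assert (l <= c + e).
  { apply (@Rle_cv_lim (fun n => f (n + N)%nat) (fun _ => c + e)); auto using Un_cv_const.
    intros n; specialize (Hbound (n + N)%nat ltac:(lia)); Rabs_bounds; lra. }
  assert (c - e <= l).
  { apply (@Rle_cv_lim (fun _ => c - e) (fun n => f (n + N)%nat)); auto using Un_cv_const.
    intros n; specialize (Hbound (n + N)%nat ltac:(lia)); Rabs_bounds; lra. }
  Rabs_bounds; lra.
Qed.

Lemma Un_cv_close f g d l :
  Un_cv g l -> Un_cv d 0 -> (forall n, Rabs (f n - g n) <= d n) -> Un_cv f l.
Proof.
  intros Hg Hd Hfg eps Heps.
  destruct (Hg (eps / 2)) as [N1 HN1]; [lra|].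
  destruct (Hd (eps / 2)) as [N2 HN2]; [lra|].
  exists (max N1 N2); intros n Hn.
  specialize (HN1 n ltac:(lia)); specialize (HN2 n ltac:(lia)); specialize (Hfg n).
  unfold Rdist in *; rewrite Rminus_0_r in HN2; Rabs_bounds; lra.
Qed.

Definition p_Cauchy_to {X : Type} (p : X -> X -> R) (u : nat -> X) (a : R) : Prop :=
  forall eps, 0 < eps ->
    exists N : nat, forall n m, (N <= n)%nat -> (N <= m)%nat -> Rabs (p (u n) (u m) - a) < eps.

Lemma p_Cauchy_to_diag {X : Type} (p : X -> X -> R) u a :
  p_Cauchy_to p u a -> Un_cv (fun n => p (u n) (u n)) a.
Proof.
  intros Ha eps Heps; destruct (Ha eps Heps) as [N HN].
  exists N; intros n Hn; apply HN; lia.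
Qed.

Lemma p_converges_isometry {Y Z : Type} (pY : Y -> Y -> R) (pZ : Z -> Z -> R) g u v y :
  isometry pY pZ g -> (forall n, g (u n) = v n) ->
  p_converges pY u y -> p_converges pZ v (g y).
Proof.
  intros Hg Huv [Hy1 Hy2]; unfold p_converges; rewrite Hg; split.
  - apply (Un_cv_ext (fun n => pY y (u n))); auto.
    intros n; rewrite <- Huv; symmetry; apply Hg.
  - apply (Un_cv_ext (fun n => pY (u n) (u n))); auto.
    intros n; rewrite <- Huv; symmetry; apply Hg.
Qed.

Section PartialMetricSpace.
Context {Y : Type} (q : Y -> Y -> R) (Hq : is_partial_metric q).

Let q_sym x y : q x y = q y x.
Proof. apply Hq. Qed.

Let q_triangle x y z : q x z + q y y <= q x y + q y z.
Proof. apply Hq. Qed.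

Lemma p_converges_uniform u y :
  p_converges q u y ->
  forall eps, 0 < eps -> exists N, forall n z, (N <= n)%nat -> Rabs (q (u n) z - q y z) < eps.
Proof.
  intros [Hy1 Hy2] eps Heps.
  destruct (Hy1 (eps / 2)) as [N1 HN1]; [lra|].
  destruct (Hy2 (eps / 2)) as [N2 HN2]; [lra|].
  exists (max N1 N2); intros n z Hn.
  specialize (HN1 n ltac:(lia)); specialize (HN2 n ltac:(lia)); unfold Rdist in *.
  pose proof (q_triangle (u n) y z); pose proof (q_triangle y (u n) z).
  rewrite (q_sym (u n) y) in *; Rabs_bounds; lra.
Qed.

Lemma p_Cauchy_to_approx u v d a :
  Un_cv d 0 -> (forall k z, Rabs (q (v k) z - q (u k) z) <= d k) ->
  p_Cauchy_to q u a -> p_Cauchy_to q v a.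
Proof.
  intros Hd Hvu Ha eps Heps.
  destruct (Hd (eps / 3)) as [N1 HN1]; [lra|].
  destruct (Ha (eps / 3)) as [N2 HN2]; [lra|].
  exists (max N1 N2); intros n m Hn Hm.
  pose proof (HN1 n ltac:(lia)); pose proof (HN1 m ltac:(lia)).
  pose proof (HN2 n m ltac:(lia) ltac:(lia)).
  pose proof (Hvu n (v m)); pose proof (Hvu m (u n)).
  unfold Rdist in *; rewrite !Rminus_0_r in *.
  rewrite (q_sym (v m) (u n)), (q_sym (u m) (u n)) in *.
  Rabs_bounds; lra.
Qed.

Section Criterion.
Context {X : Type} (e : X -> Y).
Hypothesis e_limits : forall y, exists x : nat -> X, p_converges q (fun n => e (x n)) y.
Hypothesis e_Cauchy_converges : forall x : nat -> X,
  p_Cauchy q (fun n => e (x n)) -> exists y, p_converges q (fun n => e (x n)) y.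

Lemma pdense_of_limits : pdense q (fun y => exists x, e x = y).
Proof.
  intros y eps Heps.
  destruct (e_limits y) as [x [Hx _]].
  destruct (Hx eps Heps) as [N HN].
  exists (e (x N)); split; [eauto|].
  specialize (HN N (le_n N)); unfold pball, Rdist in *; Rabs_bounds; lra.
Qed.

Lemma p_Cauchy_complete_of_limits : p_Cauchy_complete q.
Proof.
  intros u [a Ha].
  assert (Happrox : exists x : nat -> X, forall k z,
             Rabs (q (e (x k)) z - q (u k) z) <= 1 / 2 ^ k).
  { apply (choice (fun k x => forall z, Rabs (q (e x) z - q (u k) z) <= 1 / 2 ^ k)).
    intros k; destruct (e_limits (u k)) as [s Hs].
    destruct (p_converges_uniform _ _ Hs (1 / 2 ^ k)) as [N HN].
    { apply Rdiv_lt_0_compat; [lra | apply pow_lt; lra]. }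
    exists (s N); intros z; apply Rlt_le, HN, le_n. }
  destruct Happrox as [x Hx].
  assert (Hxa : p_Cauchy_to q (fun k => e (x k)) a).
  { apply (p_Cauchy_to_approx u _ (fun k => 1 / 2 ^ k)); auto using cv_pow_half. }
  destruct (e_Cauchy_converges x (ex_intro _ a Hxa)) as [y [Hy1 Hy2]].
  assert (Hyy : q y y = a) by exact (UL_sequence _ _ _ Hy2 (p_Cauchy_to_diag _ _ _ Hxa)).
  exists y; split.
  - apply (Un_cv_close _ _ (fun k => 1 / 2 ^ k) _ Hy1 (cv_pow_half 1)).
    intros k; rewrite !(q_sym y); rewrite <- Rabs_Ropp, Ropp_minus_distr; apply Hx.
  - rewrite Hyy; exact (p_Cauchy_to_diag _ _ _ Ha).
Qed.

End Criterion.

Section AdjoinCopy.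
Variable c : Y.

(* [Some c] lies in every ball around [None], as
   [adjoin_copy None (Some c) = adjoin_copy None None]. *)
Definition adjoin_copy (a b : option Y) : R :=
  match a, b with
  | Some x, Some y => q x y
  | None, Some y => q c y + 1
  | Some x, None => q x c + 1
  | None, None => q c c + 1
  end.

Lemma adjoin_copy_partial_metric : is_partial_metric adjoin_copy.
Proof.
  destruct Hq as (q_nonneg & q_sep & q_small & _ & _).
  repeat split.
  - intros [x|] [y|]; simpl;
      [apply q_nonneg | pose proof (q_nonneg x c) | pose proof (q_nonneg c y)
      | pose proof (q_nonneg c c)]; lra.
  - intros [x|] [y|]; simpl; intros E1 E2; try reflexivity.
    + f_equal; apply q_sep; assumption.
    + pose proof (q_small x c); lra.
    + pose proof (q_small y c) as Hy; rewrite (q_sym y c) in Hy; lra.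
  - intros [x|] [y|]; simpl;
      [apply q_small | pose proof (q_small x c) | pose proof (q_small c y) | ]; lra.
  - intros [x|] [y|]; simpl; rewrite ?(q_sym x y), ?(q_sym x c), ?(q_sym y c); reflexivity.
  - intros [x|] [y|] [z|]; simpl;
      [ apply q_triangle | pose proof (q_triangle x y c) | pose proof (q_triangle x c z)
      | pose proof (q_sym x c) | pose proof (q_triangle c y z)
      | pose proof (q_triangle c y c) | | ]; lra.
Qed.

Lemma adjoin_copy_complete : p_Cauchy_complete q -> p_Cauchy_complete adjoin_copy.
Proof.
  intros q_complete w [a Ha].
  destruct (classic (exists N, forall n, (N <= n)%nat -> w n <> None)) as [[N HN]|Hoften].
  - set (u n := match w n with Some y => y | None => c end).
    assert (Hwu : forall n, (N <= n)%nat -> Some (u n) = w n).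
    { intros n Hn; specialize (HN n Hn); unfold u; destruct (w n); congruence. }
    assert (Hu : p_Cauchy_to q u a).
    { intros eps Heps; destruct (Ha eps Heps) as [M HM].
      exists (max N M); intros n m Hn Hm.
      specialize (HM n m ltac:(lia) ltac:(lia)).
      rewrite <- (Hwu n), <- (Hwu m) in HM by lia; exact HM. }
    destruct (q_complete u (ex_intro _ a Hu)) as [y Hy].
    exists (Some y); destruct Hy as [Hy1 Hy2]; split; simpl.
    + apply (Un_cv_eventually_ext (fun n => q y (u n)) _ N); auto.
      intros n Hn; rewrite <- Hwu; auto.
    + apply (Un_cv_eventually_ext (fun n => q (u n) (u n)) _ N); auto.
      intros n Hn; rewrite <- Hwu; auto.
  - assert (Hnone : forall N, exists n, (N <= n)%nat /\ w n = None).
    { intros N; apply NNPP; intros Hno; apply Hoften; exists N.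
      intros n Hn Hwn; apply Hno; eauto. }
    assert (Haa : adjoin_copy None None = a).
    { apply cond_eq; intros eps Heps; destruct (Ha eps Heps) as [N HN].
      destruct (Hnone N) as (n & Hn & Hwn).
      specialize (HN n n Hn Hn); rewrite Hwn in HN; exact HN. }
    exists None; unfold p_converges; rewrite Haa; split.
    + intros eps Heps; destruct (Ha eps Heps) as [N HN].
      destruct (Hnone N) as (m & Hm & Hwm).
      exists N; intros n Hn; specialize (HN m n Hm Hn); rewrite Hwm in HN; exact HN.
    + exact (p_Cauchy_to_diag _ _ _ Ha).
Qed.

Lemma adjoin_copy_pCauchy_completion {X : Type} (p : X -> X -> R) (i : X -> Y) x0 :
  is_pCauchy_completion p q i -> i x0 = c ->
  is_pCauchy_completion p adjoin_copy (fun x => Some (i x)).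
Proof.
  intros (_ & q_complete & i_iso & i_dense) Hx0.
  split; [apply adjoin_copy_partial_metric|].
  split; [apply adjoin_copy_complete, q_complete|].
  split; [intros x y; apply i_iso|].
  intros [y|] eps Heps.
  - destruct (i_dense y eps Heps) as (y' & [x Hx] & Hy').
    exists (Some y'); split; [exists x; congruence | exact Hy'].
  - exists (Some c); split; [exists x0; congruence|].
    unfold pball; simpl; lra.
Qed.

Lemma adjoin_copy_not_limit (y : nat -> Y) :
  ~ p_converges adjoin_copy (fun n => Some (y n)) None.
Proof.
  intros [Hlim Hdiag]; simpl in Hlim, Hdiag.
  assert (Hcv : Un_cv (fun n => q c (y n)) (q c c)).
  { apply (Un_cv_ext (fun n => (q c (y n) + 1) - 1)); [intros; ring|].
    replace (q c c) with (q c c + 1 - 1) by ring.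
    apply CV_minus; [exact Hlim | apply Un_cv_const]. }
  assert (q c c + 1 <= q c c); [|lra].
  apply (@Rle_cv_lim (fun n => q (y n) (y n)) (fun n => q c (y n))); auto.
  intros n; rewrite (q_sym c); apply Hq.
Qed.

End AdjoinCopy.
End PartialMetricSpace.

Section Completion.
Context {X : Type} (p : X -> X -> R) (Hp : is_partial_metric p).

Let p_sym x y : p x y = p y x.
Proof. apply Hp. Qed.

Let p_triangle x y z : p x z + p y y <= p x y + p y z.
Proof. apply Hp. Qed.

Lemma p_Cauchy_const x : p_Cauchy p (fun _ => x).
Proof.
  exists (p x x); intros eps Heps; exists 0%nat; intros.
  rewrite Rminus_diag, Rabs_R0; lra.
Qed.

Lemma p_Cauchy_pair_Cauchy_crit u v :
  p_Cauchy p u -> p_Cauchy p v -> Cauchy_crit (fun n => p (u n) (v n)).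
Proof.
  intros [a Ha] [b Hb] eps Heps.
  destruct (Ha (eps / 4)) as [N1 HN1]; [lra|].
  destruct (Hb (eps / 4)) as [N2 HN2]; [lra|].
  exists (max N1 N2); intros n m Hn Hm; unfold Rdist.
  pose proof (HN1 n m ltac:(lia) ltac:(lia)); pose proof (HN1 m n ltac:(lia) ltac:(lia)).
  pose proof (HN1 n n ltac:(lia) ltac:(lia)); pose proof (HN1 m m ltac:(lia) ltac:(lia)).
  pose proof (HN2 n m ltac:(lia) ltac:(lia)); pose proof (HN2 m n ltac:(lia) ltac:(lia)).
  pose proof (HN2 n n ltac:(lia) ltac:(lia)); pose proof (HN2 m m ltac:(lia) ltac:(lia)).
  pose proof (p_triangle (u n) (u m) (v n)); pose proof (p_triangle (u m) (v m) (v n)).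
  pose proof (p_triangle (u m) (u n) (v m)); pose proof (p_triangle (u n) (v n) (v m)).
  rewrite (p_sym (v m) (v n)) in *.
  Rabs_bounds; lra.
Qed.

(* A junk value unless [u] and [v] are p-Cauchy, when [p (u n) (v n)] converges. *)
Definition plim (u v : nat -> X) : R :=
  epsilon (inhabits 0) (Un_cv (fun n => p (u n) (v n))).

Lemma plim_spec u v :
  p_Cauchy p u -> p_Cauchy p v -> Un_cv (fun n => p (u n) (v n)) (plim u v).
Proof.
  intros Hu Hv; unfold plim; apply epsilon_spec.
  destruct (R_complete _ (p_Cauchy_pair_Cauchy_crit u v Hu Hv)) as [l Hl]; eauto.
Qed.

Lemma plim_eq u v l :
  p_Cauchy p u -> p_Cauchy p v -> Un_cv (fun n => p (u n) (v n)) l -> plim u v = l.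
Proof. intros Hu Hv; apply UL_sequence, plim_spec; assumption. Qed.

Section Plim.
Variables u v w : nat -> X.
Hypotheses (Hu : p_Cauchy p u) (Hv : p_Cauchy p v) (Hw : p_Cauchy p w).

Lemma plim_sym : plim u v = plim v u.
Proof.
  apply plim_eq, (Un_cv_ext (fun n => p (v n) (u n))); [assumption | assumption |
    intros; apply p_sym | apply plim_spec; assumption].
Qed.

Lemma plim_nonneg : 0 <= plim u v.
Proof.
  apply (@Rle_cv_lim (fun _ => 0) (fun n => p (u n) (v n)));
    [intros; apply Hp | apply Un_cv_const | apply plim_spec; assumption].
Qed.

Lemma plim_small_self : plim u u <= plim u v.
Proof.
  apply (@Rle_cv_lim (fun n => p (u n) (u n)) (fun n => p (u n) (v n)));
    [intros; apply Hp | apply plim_spec; assumption | apply plim_spec; assumption].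
Qed.

Lemma plim_triangle : plim u w + plim v v <= plim u v + plim v w.
Proof.
  apply (@Rle_cv_lim (fun n => p (u n) (w n) + p (v n) (v n))
                     (fun n => p (u n) (v n) + p (v n) (w n)));
    [intros; apply p_triangle | apply CV_plus | apply CV_plus]; apply plim_spec; assumption.
Qed.

End Plim.

Lemma plim_const x y : plim (fun _ => x) (fun _ => y) = p x y.
Proof. apply plim_eq; auto using p_Cauchy_const, Un_cv_const. Qed.

Lemma plim_diag u a : p_Cauchy_to p u a -> plim u u = a.
Proof.
  intros Ha; assert (Hu : p_Cauchy p u) by (exists a; exact Ha).
  apply plim_eq; auto using p_Cauchy_to_diag.
Qed.

Lemma plim_const_r_cv u a :
  p_Cauchy_to p u a -> Un_cv (fun k => plim u (fun _ => u k)) a.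
Proof.
  intros Ha eps Heps; assert (Hu : p_Cauchy p u) by (exists a; exact Ha).
  destruct (Ha (eps / 2)) as [N HN]; [lra|].
  exists N; intros k Hk; unfold Rdist.
  enough (Rabs (plim u (fun _ => u k) - a) <= eps / 2) by lra.
  apply (Un_cv_dist_le _ _ _ _ N (plim_spec _ _ Hu (p_Cauchy_const (u k)))).
  intros n Hn; apply Rlt_le, HN; lia.
Qed.

Definition peqv (u v : nat -> X) : Prop := plim u u = plim u v /\ plim u v = plim v v.

Lemma plim_peqv_l u u' v :
  p_Cauchy p u -> p_Cauchy p u' -> p_Cauchy p v -> peqv u u' -> plim u v = plim u' v.
Proof.
  intros Hu Hu' Hv [E1 E2].
  pose proof (plim_triangle u u' v Hu Hu' Hv); pose proof (plim_triangle u' u v Hu' Hu Hv).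
  pose proof (plim_sym u u' Hu Hu'); lra.
Qed.

Definition pclass (u : nat -> X) : (nat -> X) -> Prop := fun v => p_Cauchy p v /\ peqv u v.

Lemma pclass_eq u v : p_Cauchy p u -> p_Cauchy p v -> peqv u v -> pclass u = pclass v.
Proof.
  intros Hu Hv Huv.
  assert (Hl : forall w, p_Cauchy p w -> plim u w = plim v w) by auto using plim_peqv_l.
  apply functional_extensionality; intros w; apply propositional_extensionality.
  unfold pclass, peqv; destruct Huv as [E1 E2].
  split; intros [Hw Ew]; split; auto; rewrite <- ?Hl, ?Hl in * by assumption; lra.
Qed.

Definition completion : Type :=
  {S : (nat -> X) -> Prop | exists u, p_Cauchy p u /\ S = pclass u}.

Definition of_seq (u : nat -> X) (Hu : p_Cauchy p u) : completion :=
  exist _ (pclass u) (ex_intro _ u (conj Hu eq_refl)).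

Definition repr (S : completion) : nat -> X :=
  proj1_sig (constructive_indefinite_description _ (proj2_sig S)).

Lemma repr_spec S : p_Cauchy p (repr S) /\ proj1_sig S = pclass (repr S).
Proof. unfold repr; destruct constructive_indefinite_description as [u Hu]; exact Hu. Qed.

Lemma repr_Cauchy S : p_Cauchy p (repr S).
Proof. apply repr_spec. Qed.

Definition pcompl (S T : completion) : R := plim (repr S) (repr T).

Definition embed (x : X) : completion := of_seq (fun _ => x) (p_Cauchy_const x).

Lemma of_seq_eq u v Hu Hv : peqv u v -> of_seq u Hu = of_seq v Hv.
Proof. intros Huv; apply subset_eq_compat, pclass_eq; assumption. Qed.

Lemma of_seq_repr S : S = of_seq (repr S) (repr_Cauchy S).
Proof.
  pose proof (proj2 (repr_spec S)) as ES; destruct S as [S HS]; simpl in ES.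
  apply subset_eq_compat; exact ES.
Qed.

Lemma peqv_repr_of_seq u Hu : peqv u (repr (of_seq u Hu)).
Proof.
  destruct (repr_spec (of_seq u Hu)) as [Hr Er]; simpl in Er.
  enough (Hin : pclass u (repr (of_seq u Hu))) by apply Hin.
  rewrite Er; split; [exact Hr | split; reflexivity].
Qed.

Lemma pcompl_of_seq u v Hu Hv : pcompl (of_seq u Hu) (of_seq v Hv) = plim u v.
Proof.
  unfold pcompl.
  pose proof (repr_Cauchy (of_seq u Hu)); pose proof (repr_Cauchy (of_seq v Hv)).
  rewrite <- (plim_peqv_l u _ _), plim_sym, <- (plim_peqv_l v _ u), plim_sym;
    auto using peqv_repr_of_seq.
Qed.

Lemma pcompl_partial_metric : is_partial_metric pcompl.
Proof.
  unfold pcompl; repeat split.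
  - intros; apply plim_nonneg; apply repr_Cauchy.
  - intros S T E1 E2; rewrite (of_seq_repr S), (of_seq_repr T).
    apply of_seq_eq; split; assumption.
  - intros; apply plim_small_self; apply repr_Cauchy.
  - intros; apply plim_sym; apply repr_Cauchy.
  - intros; apply plim_triangle; apply repr_Cauchy.
Qed.

Lemma embed_isometry : isometry p pcompl embed.
Proof. intros x y; unfold embed; rewrite pcompl_of_seq; apply plim_const. Qed.

Lemma embed_limit u Hu : p_converges pcompl (fun n => embed (u n)) (of_seq u Hu).
Proof.
  pose proof Hu as [a Ha].
  unfold p_converges, embed; rewrite pcompl_of_seq, (plim_diag u a Ha); split.
  - apply (Un_cv_ext (fun k => plim u (fun _ => u k))).
    + intros k; symmetry; apply pcompl_of_seq.
    + exact (plim_const_r_cv u a Ha).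
  - apply (Un_cv_ext (fun k => p (u k) (u k))).
    + intros k; rewrite pcompl_of_seq; symmetry; apply plim_const.
    + exact (p_Cauchy_to_diag p u a Ha).
Qed.

Lemma completion_limits S : exists x : nat -> X, p_converges pcompl (fun n => embed (x n)) S.
Proof. rewrite (of_seq_repr S); eexists; apply embed_limit. Qed.

Lemma completion_Cauchy_converges (x : nat -> X) :
  p_Cauchy pcompl (fun n => embed (x n)) ->
  exists S, p_converges pcompl (fun n => embed (x n)) S.
Proof.
  intros [a Ha].
  assert (Hx : p_Cauchy p x).
  { exists a; intros eps Heps; destruct (Ha eps Heps) as [N HN].
    exists N; intros n m Hn Hm; rewrite <- embed_isometry; auto. }
  exists (of_seq x Hx); apply embed_limit.
Qed.

Lemma completion_is_pCauchy_completion : is_pCauchy_completion p pcompl embed.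
Proof.
  split; [apply pcompl_partial_metric|].
  split; [apply (p_Cauchy_complete_of_limits _ pcompl_partial_metric embed);
          [apply completion_limits | apply completion_Cauchy_converges]|].
  split; [apply embed_isometry|].
  apply pdense_of_limits, completion_limits.
Qed.

End Completion.

Theorem corollary1p5 (X : Type) (p : X -> X -> R) :
  is_partial_metric p -> inhabited X ->
  exists (Y : Type) (pY : Y -> Y -> R) (i : X -> Y)
         (Z : Type) (pZ : Z -> Z -> R) (j : X -> Z),
    is_pCauchy_completion p pY i /\ is_pCauchy_completion p pZ j /\
    ~ (exists g : Y -> Z,
         bijective_map g /\ isometry pY pZ g /\ forall x, g (i x) = j x).
Proof.
  intros Hp [x0].
  pose proof (completion_is_pCauchy_completion p Hp) as Hcompl.
  pose proof (pcompl_partial_metric p Hp) as Hpm.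
  exists (completion p), (pcompl p), (embed p), (option (completion p)),
    (adjoin_copy (pcompl p) (embed p x0)), (fun x => Some (embed p x)).
  split; [exact Hcompl|].
  split; [exact (adjoin_copy_pCauchy_completion _ Hpm _ _ _ x0 Hcompl eq_refl)|].
  intros (g & [_ g_onto] & g_iso & g_embed).
  destruct (g_onto None) as [S HS].
  destruct (completion_limits p Hp S) as [x Hx].
  apply (adjoin_copy_not_limit _ Hpm (embed p x0) (fun n => embed p (x n))).
  rewrite <- HS.
  exact (p_converges_isometry _ _ g _ _ _ g_iso (fun n => g_embed (x n)) Hx).
Qed.
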